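(* Let $p,q$ be positive integers with $\min\{2,\frac{p}{4}\}\leq q\leq 4p$. Then \[pq+\left\lfloor\frac{1}{2}\binom{q}{2}\right\rfloor\leq \operatorname{diam}(\mathcal{R}(K_{p,q})).\]
   Context: $K_{p,q}$ is the complete bipartite graph with parts of sizes $p$ and $q$. For a connected graph $G$, a search tree on $G$ is a rooted tree with vertex set $V(G)$ defined recursively: its root is some vertex $r\in V(G)$, and the children of $r$ are the roots of search trees on the connected components of $G-r$. For a rooted tree $T$ and $w\in V(T)$, $T|w$ denotes the subtree rooted at $w$. Let $T$ be a search tree on $G$, let $v$ be a child of $u$ in $T$, and let $p$ be the parent of $u$ (if it exists). The $uv$-rotation transforms $T$ into the search tree $T'$ in which: $u$ is a child of $v$ and $v$ is a child of $p$ (or $v$ is the root if $u$ was the root); every subtree of $u$ in $T$ other than $T|v$ is a subtree of $u$ in $T'$; and every subtree $S$ of $v$ in $T$ is a subtree of $u$ in $T'$ if $u$ is adjacent in $G$ to some vertex of $S$, and a subtree of $v$ in $T'$ otherwise. The rotation graph $\mathcal{R}(G)$ is the graph whose vertices are the search trees on $G$, two being adjacent iff they differ by one rotation. $\operatorname{diam}$ denotes graph diameter. *)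

From mathcomp Require Import all_boot.
Set Implicit Arguments. Unset Strict Implicit. Unset Printing Implicit Defensive.

Section SearchTrees.
Variable T : finType.
(* a simple graph on T given by a (symmetric, irreflexive) adjacency relation *)
Variable e : rel T.

(* A rooted tree on vertex set T is represented by its parent function:
   par x = Some y iff y is the parent of x; par r = None iff r is the root. *)
Definition rtree := {ffun T -> option T}.

Definition induced_rel (S : {set T}) : rel T :=
  fun a b => [&& e a b, a \in S & b \in S].

Definition comp (S : {set T}) (x : T) : {set T} :=
  [set y in S | connect (induced_rel S) x y].

Definition comps (S : {set T}) : {set {set T}} := [set comp S x | x in S].

Inductive st_on (par : rtree) : {set T} -> T -> Prop :=
| StOn (S : {set T}) (r : T) :
    r \in S ->
    (forall C, C \in comps (S :\ r) ->
       exists2 c, c \in C & par c = Some r /\ st_on par C c) ->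
    st_on par S r.

Definition is_search_tree (par : rtree) : Prop :=
  exists r, par r = None /\ st_on par [set: T] r.

Definition subtree (par : rtree) (w : T) : {set T} :=
  [set x | connect (fun a b => par a == Some b) x w].

(* the uv-rotation, for v a child of u *)
Definition rotate (par : rtree) (u v : T) : rtree :=
  [ffun x => if x == u then Some v
             else if x == v then par u
             else if par x == Some v then
               (if [exists y in subtree par x, e u y] then Some u else Some v)
             else par x].

Definition rot_adj (a b : rtree) : Prop :=
  (exists u v, a v = Some u /\ b = rotate a u v) \/
  (exists u v, b v = Some u /\ a = rotate b u v).

Fixpoint rwalk (a : rtree) (s : seq rtree) : Prop :=
  match s with
  | [::] => True
  | b :: s' => [/\ is_search_tree b, rot_adj a b & rwalk b s']
  end.

(* N <= diam(R(G)): there are two search trees whose distance in R(G)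
   (least length of a walk joining them, infinite if none) is at least N. *)
Definition rot_diam_ge (N : nat) : Prop :=
  exists a b, [/\ is_search_tree a, is_search_tree b &
    forall s : seq rtree, rwalk a s -> last a s = b -> N <= size s].

End SearchTrees.

Definition Kpq_rel (p q : nat) : rel ('I_p + 'I_q)%type :=
  fun x y => match x, y with
             | inl _, inr _ => true
             | inr _, inl _ => true
             | _, _ => false
             end.
Arguments Kpq_rel : clear implicits.

(* A rotation reverses the ancestor relation of exactly one pair of
   vertices, the two vertices it rotates.  Let A be the path of the right
   vertices 0, ..., q-1 with every left vertex hanging below it, and B a
   broom in which the right vertices appear in decreasing order, interleaved
   with some of the left vertices.  Along a walk from A to B, a left and a
   right vertex are always comparable, and two right vertices can only become
   incomparable once both have been below every left vertex.  With S the set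
   of right vertices that are at some time below every left vertex, a
   left-right pair costs one rotation if its right vertex ends below the left
   one and two if it ends above it but lies in S, while every pair of right
   vertices not both in S costs one.  Writing q = 4t + r and choosing B
   accordingly, the minimum over S of the total is at least p q + C(q,2)/2. *)

From Pilot Require Import Defs.
From mathcomp Require Import all_boot zify.
Set Implicit Arguments. Unset Strict Implicit. Unset Printing Implicit Defensive.

Section Ancestry.
Variable T : finType.
Implicit Types (t : rtree T) (x y z : T).

Definition lift t (o : option T) : option T := if o is Some z then t z else None.

Definition up t n y : option T := iter n (lift t) (Some y).

(* [anc t x y]: x is a proper ancestor of y. *)
Definition anc t x y : bool := fconnect (lift t) (t y) (Some x).

Definition acyclic t := forall x, ~ anc t x x.

Lemma ancP t x y : reflect (exists n, up t n.+1 y = Some x) (anc t x y).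
Proof.
rewrite /anc /up; apply: (iffP idP) => [h|[n]].
  by exists (findex (lift t) (t y) (Some x)); rewrite iterSr iter_findex.
by rewrite iterSr => <-; exact: fconnect_iter.
Qed.

Lemma up_add t n m y :
  up t (n + m) y = if up t n y is Some z then up t m z else None.
Proof.
elim: m => [|m IH]; first by rewrite addn0; case: (up t n y).
by rewrite addnS {1}/up iterS -/(up t _ y) IH; case: (up t n y).
Qed.

Lemma up1 t y : up t 1 y = t y.
Proof. by []. Qed.

Lemma anc_par t x y : t y = Some x -> anc t x y.
Proof. by move=> h; apply/ancP; exists 0. Qed.

Lemma anc_trans t x y z : anc t x y -> anc t y z -> anc t x z.
Proof.
move=> /ancP[n hn] /ancP[m hm]; apply/ancP; exists (m.+1 + n).
by rewrite -addnS up_add hm.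
Qed.

Lemma anc_inv t x y : anc t x y ->
  t y = Some x \/ exists2 z, t y = Some z & anc t x z.
Proof.
case/ancP=> [[|n]] h; first by left.
right; move: h; rewrite -add1n up_add up1.
by case: (t y) => [z|] //= h; exists z => //; apply/ancP; exists n.
Qed.

Lemma anc_ind t (P : T -> T -> Prop) :
  (forall x y, t y = Some x -> P x y) ->
  (forall x y z, t y = Some z -> anc t x z -> P x z -> P x y) ->
  forall x y, anc t x y -> P x y.
Proof.
move=> hpar hstep x y /ancP[n]; elim: n y => [|n IH] y; first exact: hpar.
rewrite -add1n up_add up1; case ey: (t y) => [z|] //= hz.
by apply: (hstep x y z ey) => //; [apply/ancP; exists n | exact: IH].
Qed.

Lemma anc_comparable t x y z : anc t x z -> anc t y z ->
  x = y \/ anc t x y \/ anc t y x.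
Proof.
move=> /ancP[n hn] /ancP[m hm].
case: (ltngtP n m) => hnm.
- right; right; apply/ancP; exists (m - n).-1.
  by move: hm; rewrite (_ : m.+1 = n.+1 + (m - n).-1.+1) ?up_add ?hn //; lia.
- right; left; apply/ancP; exists (n - m).-1.
  by move: hn; rewrite (_ : n.+1 = m.+1 + (n - m).-1.+1) ?up_add ?hm //; lia.
- by left; move: hn; rewrite hnm hm => -[].
Qed.

Lemma anc_asym t x y : acyclic t -> anc t x y -> ~~ anc t y x.
Proof. by move=> ac h1; apply/negP => h2; apply: (ac x); exact: anc_trans h1 h2. Qed.

Lemma acyclic_rooted t r :
  t r = None -> (forall x, x = r \/ anc t r x) -> acyclic t.
Proof.
move=> hr hall x /ancP[n hn].
have hper k : up t (k * n.+1) x = Some x.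
  by elim: k => [|k IH] //; rewrite mulSn up_add hn.
have [m hm] : exists m, up t m x = None.
  case: (hall x) => [->|/ancP[m hm]]; first by exists 1.
  by exists m.+2; rewrite -addn1 up_add hm /= hr.
have hmle : m <= m * n.+1 by rewrite leq_pmulr.
by move: (hper m); rewrite -(subnKC hmle) up_add hm.
Qed.

End Ancestry.

Section SearchTreeAncestry.
Variables (T : finType) (e : rel T).
Implicit Types (t : rtree T) (x y : T).

Definition ancestral t :=
  acyclic t /\ (forall x y, x != y -> e x y -> anc t x y || anc t y x).

(* The automatic induction principle of [st_on] has no induction hypothesis
   for the subtrees, which occur under an existential. *)
Lemma st_on_strong_ind t (P : {set T} -> T -> Prop) :
  (forall (S : {set T}) r, r \in S ->
     (forall C, C \in comps e (S :\ r) ->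
        exists2 c, c \in C & [/\ t c = Some r, st_on e t C c & P C c]) ->
     P S r) ->
  forall S r, st_on e t S r -> P S r.
Proof.
move=> hP; fix IH 3 => S0 r0 [S r hr hC].
apply: hP hr _ => C /hC[c hc [hcr hst]].
by exists c => //; split=> //; exact: IH.
Qed.

Lemma st_on_anc t S r : st_on e t S r ->
  (forall x, x \in S -> x = r \/ anc t r x) /\
  (forall x y, x \in S -> y \in S -> x != y -> e x y -> anc t x y || anc t y x).
Proof.
elim/st_on_strong_ind=> {}S {}r hr hC.
pose K x := Defs.comp e (S :\ r) x.
have Kx x : x \in S :\ r -> x \in K x by move=> hx; rewrite inE hx connect0.
have hK x : x \in S :\ r -> exists2 c, t c = Some r &
    (forall y, y \in K x -> anc t r y) /\
    (forall y z, y \in K x -> z \in K x -> y != z -> e y z -> anc t y z || anc t z y).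
  move=> hx; have [|c hc [hcr _ [hbelow hcmp]]] := hC (K x); first exact: imset_f.
  exists c => //; split=> // y /hbelow[->|h]; first exact: anc_par.
  exact: anc_trans (anc_par hcr) h.
have below x : x \in S -> x != r -> anc t r x.
  move=> hxS hxr; have hx : x \in S :\ r by rewrite !inE hxr.
  by have [c _ [h _]] := hK x hx; exact/h/Kx.
split=> [x hxS|x y hxS hyS hxy hexy].
  by case: (eqVneq x r) => [->|hxr]; [left | right; exact: below].
case: (eqVneq x r) => [exr|hxr]; first by rewrite exr below // -exr eq_sym.
case: (eqVneq y r) => [->|hyr]; first by rewrite below ?orbT.
have hx : x \in S :\ r by rewrite !inE hxr.
have hy : y \in S :\ r by rewrite !inE hyr.
have [c _ [_ hcmp]] := hK x hx.
apply: hcmp => //; first exact: Kx.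
by rewrite inE hy; apply: connect1; rewrite /induced_rel hexy hx hy.
Qed.

Lemma search_tree_ancestral t : is_search_tree e t -> ancestral t.
Proof.
case=> r [hr /st_on_anc[hbelow hcmp]]; split.
  by apply: (acyclic_rooted hr) => x; apply: hbelow; rewrite inE.
by move=> x y; apply: hcmp; rewrite inE.
Qed.

End SearchTreeAncestry.

Definition flipped (T : finType) (a b : rtree T) (x y : T) : bool :=
  (anc a x y && anc b y x) || (anc a y x && anc b x y).

Section Rotation.
Variables (T : finType) (e : rel T) (t : rtree T) (u v : T).
Hypothesis tv : t v = Some u.
Hypothesis t_acyclic : acyclic t.
Let t' := rotate e t u v.
Hypothesis t'_acyclic : acyclic t'.

Let anc_uv : anc t u v. Proof. exact: anc_par. Qed.

Lemma rotate_cases z :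
  [\/ z = u /\ t' z = Some v,
      [/\ z = v, z <> u & t' z = t u],
      [/\ z <> u, z <> v, t z = Some v & t' z = Some u \/ t' z = Some v] |
      [/\ z <> u, z <> v, t z <> Some v & t' z = t z]].
Proof.
rewrite /t' /rotate ffunE.
case: (eqVneq z u) => [->|/eqP hzu]; first by constructor 1.
case: (eqVneq z v) => [ezv|/eqP hzv]; first by constructor 2; split; rewrite -?ezv.
case: (eqVneq (t z) (Some v)) => [hz|/eqP hz]; last by constructor 4.
by constructor 3; split=> //; case: ifP; [left|right].
Qed.

(* Following parents in t' from z, one stays among the t-ancestors of z
   until v is reached, and then continues among the t-ancestors of u. *)
Lemma up_rotate z n w : up t' n z = Some w ->
  [\/ w = z \/ anc t w z, w = v /\ (u = z \/ anc t u z) | anc t w u /\ (u = z \/ anc t u z)].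
Proof.
have Dpar a b : a = z \/ anc t a z -> t a = Some b -> anc t b z.
  by move=> [->|h] hb; [exact: anc_par | exact: anc_trans (anc_par hb) h].
elim: n w => [|n IH] w; first by move=> [<-]; constructor 1; left.
rewrite /up iterS -/(up t' n z); case ew: (up t' n z) => [w1|] //= hw1.
case: (IH w1 ew) => [hD|[e1 hU]|[ha hU]].
- case: (rotate_cases w1) => [[e1 e2]|[e1 _ e3]|[_ _ e3 e4]|[_ _ _ e4]].
  + by subst; move: hw1; rewrite e2 => -[<-]; constructor 2.
  + subst; move: hw1; rewrite e3 => hw1.
    have hUz : anc t u z by case: hD => [<-|h]; [exact: anc_uv | exact: anc_trans anc_uv h].
    by constructor 3; split; [exact: anc_par | right].
  + have hUz : anc t u z := anc_trans anc_uv (Dpar _ _ hD e3).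
    case: e4 => e4; move: hw1; rewrite e4 => -[<-]; first by constructor 1; right.
    by constructor 2; split=> //; right.
  + by constructor 1; right; move: hw1; rewrite e4; exact: Dpar.
- subst w1; case: (rotate_cases v) => [[e1 _]|[_ _ e3]|[_ e2 _ _]|[_ e2 _ _]] //.
  + by have := anc_uv; rewrite e1 => /t_acyclic.
  + by move: hw1; rewrite e3 => hw1; constructor 3; split=> //; exact: anc_par.
- case: (rotate_cases w1) => [[e1 _]|[e1 _ _]|[_ _ e3 _]|[_ _ _ e4]].
  + by subst; case: (t_acyclic ha).
  + by subst; case: (t_acyclic (anc_trans ha anc_uv)).
  + by case: (t_acyclic (anc_trans (anc_par e3) (anc_trans ha anc_uv))).
  + move: hw1; rewrite e4 => hw1; constructor 3; split=> //.
    exact: anc_trans (anc_par hw1) ha.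
Qed.

Lemma anc_rotate z w : anc t' w z -> w = v \/ anc t w z.
Proof.
move=> /[dup] hanc /ancP[n /up_rotate[[ewz|h]|[-> _]|[hwu [euz|huz]]]].
- by subst; case: (t'_acyclic hanc).
- by right.
- by left.
- by right; rewrite -euz.
- by right; exact: anc_trans hwu huz.
Qed.

Lemma up_rotate_above y : anc t y u -> forall n, up t' n y = up t n y.
Proof.
move=> hy.
have key n : up t' n y = up t n y /\
    (up t n y = None \/ exists2 w, up t n y = Some w & anc t w u).
  elim: n => [|n [IH1 IH2]]; first by split=> //; right; exists y.
  rewrite /up !iterS -!/(up _ n y) IH1.
  case: IH2 => [->|[w -> hw]]; first by split=> //; left.
  case: (rotate_cases w) => [[e1 _]|[e1 _ _]|[_ _ e3 _]|[_ _ _ e4]].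
  + by subst; case: (t_acyclic hw).
  + by subst; case: (t_acyclic (anc_trans hw anc_uv)).
  + by case: (t_acyclic (anc_trans (anc_par e3) (anc_trans hw anc_uv))).
  + rewrite /= e4; split=> //; case ew: (t w) => [w'|]; last by left.
    by right; exists w' => //; exact: anc_trans (anc_par ew) hw.
by move=> n; case: (key n).
Qed.

Lemma flipped_rotate x y : flipped t t' x y -> (x = u /\ y = v) \/ (x = v /\ y = u).
Proof.
have main a b : anc t a b -> anc t' b a -> a = u /\ b = v.
  move=> hab hba.
  case: (anc_rotate hba) => [eb|hb]; last by case/negP: (anc_asym t_acyclic hab).
  subst b; split=> //.
  case: (anc_inv hab) => [|[c hc hac]]; first by rewrite tv => -[].
  move: hc; rewrite tv => -[ec]; subst c.
  move/ancP: hba => [n]; rewrite up_rotate_above // => hn.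
  by case/negP: (anc_asym t_acyclic hab); apply/ancP; exists n.
by case/orP=> /andP[h1 h2]; [left; exact: main | right; case: (main _ _ h1 h2) => -> ->].
Qed.

End Rotation.

Lemma flipped_sym (T : finType) (a b : rtree T) x y : flipped a b x y = flipped b a x y.
Proof. by rewrite /flipped orbC andbC [anc a x y && _]andbC. Qed.

Lemma rot_adj_flipped (T : finType) (e : rel T) (a b : rtree T) :
  acyclic a -> acyclic b -> rot_adj e a b ->
  exists u v, forall x y, flipped a b x y -> (x = u /\ y = v) \/ (x = v /\ y = u).
Proof.
move=> aa ab [[u [v [huv eb]]]|[u [v [huv ea]]]]; exists u, v => x y.
  by subst b; apply: (flipped_rotate huv aa ab).
by rewrite flipped_sym; subst a; apply: (flipped_rotate huv ab aa).
Qed.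

Section WalkFlips.
Variables (T : finType) (e : rel T) (R : rel T).
Hypothesis R_asym : forall x y, R x y -> ~~ R y x.
Implicit Types (a b : rtree T) (s : seq (rtree T)).

Lemma rot_adj_flips_le1 a b : acyclic a -> acyclic b -> rot_adj e a b ->
  \sum_x \sum_(y | R x y) flipped a b x y <= 1.
Proof.
move=> aa ab /(rot_adj_flipped aa ab)[u [v huv]].
rewrite pair_big_dep /= -big_mkcondr sum1_card.
apply/card_le1_eqP => -[x y] [x' y'] /andP[/= hR /huv h] /andP[/= hR' /huv h'].
case: h h' => -[? ?] [[? ?]|[? ?]]; subst=> //.
  by case/negP: (R_asym hR').
by case/negP: (R_asym hR).
Qed.

Definition walk_tree a s m := nth a (a :: s) m.

Lemma rwalk_step a s m : rwalk e a s -> m < size s ->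
  is_search_tree e (walk_tree a s m.+1) /\
  rot_adj e (walk_tree a s m) (walk_tree a s m.+1).
Proof.
rewrite /walk_tree; elim: s a m => [|b s IH] a //= [|m] [hb hab hw] hm //=.
have [h1 h2] := IH b m hw hm.
by rewrite (set_nth_default b) // (set_nth_default b a) //= ltnW.
Qed.

Lemma walk_tree_acyclic a s m : acyclic a -> rwalk e a s -> m <= size s ->
  acyclic (walk_tree a s m).
Proof.
case: m => // m aa hw hm.
by have [/(search_tree_ancestral (e:=e))[]] := rwalk_step hw hm.
Qed.

Definition flips (tr : nat -> rtree T) n x y := \sum_(m < n) flipped (tr m) (tr m.+1) x y.

Lemma walk_flips_le a s : acyclic a -> rwalk e a s ->
  \sum_x \sum_(y | R x y) flips (walk_tree a s) (size s) x y <= size s.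
Proof.
move=> aa hw; rewrite /flips.
under eq_bigr => x _ do rewrite exchange_big /=.
rewrite exchange_big /= -[X in _ <= X]card_ord -sum1_card.
apply: leq_sum => m _; have hm := ltn_ord m.
apply: rot_adj_flips_le1 (rwalk_step hw hm).2.
  exact: walk_tree_acyclic (ltnW hm).
exact: walk_tree_acyclic hm.
Qed.

End WalkFlips.

Lemma changes_le_sum (f : nat -> bool) n k : k <= n ->
  (f 0 != f k) + (f k != f n) <= \sum_(i < n) (f i != f i.+1).
Proof.
have tri a b : a <= b -> (f a != f b) <= \sum_(a <= i < b) (f i != f i.+1).
  move=> /subnKC <-; elim: (b - a) => [|d IH]; first by rewrite addn0 eqxx.
  rewrite addnS big_nat_recr /= ?leq_addr //.
  apply: leq_trans (leq_add IH (leqnn _)).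
  by case: (f a); case: (f (a + d)); case: (f (a + d).+1).
move=> hk; rewrite -(big_mkord xpredT (fun i => (f i != f i.+1) : nat)).
by rewrite (@big_cat_nat _ _ _ k) //; exact: leq_add (tri _ _ (leq0n k)) (tri _ _ hk).
Qed.

Lemma changes_le_flips (T : finType) (tr : nat -> rtree T) n (x y : T) k :
  (forall m, m <= n -> anc (tr m) x y || anc (tr m) y x) -> k <= n ->
  (anc (tr 0) x y != anc (tr k) x y) + (anc (tr k) x y != anc (tr n) x y)
    <= flips tr n x y.
Proof.
move=> hcmp hk; apply: leq_trans (changes_le_sum (fun m => anc (tr m) x y) hk) _.
apply: leq_sum => -[m /= hm] _; rewrite /flipped.
have := hcmp m (ltnW hm); have := hcmp m.+1 hm.
by case: (anc (tr m) x y); case: (anc (tr m.+1) x y); case: (anc (tr m) y x);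
  case: (anc (tr m.+1) y x).
Qed.

Section KpqWalk.
Variables p q : nat.
Local Notation T := ('I_p + 'I_q)%type.
Local Notation e := (Kpq_rel p q).
Implicit Types (t a b : rtree T).

(* The pairs whose flips are counted: a right vertex above a left one, and
   right vertex j above right vertex j' for j < j'. *)
Definition tracked (x y : T) : bool :=
  match x, y with
  | inr _, inl _ => true
  | inr j, inr j' => j < j'
  | _, _ => false
  end.

Lemma tracked_asym x y : tracked x y -> ~~ tracked y x.
Proof. by case: x => // j; case: y => //= j' hjj'; rewrite -leqNgt ltnW. Qed.

Lemma incomparable_right_below_left t j j' : ancestral e t -> j != j' ->
  ~~ anc t (inr j) (inr j') -> ~~ anc t (inr j') (inr j) ->
  forall i, anc t (inl i) (inr j).
Proof.
move=> [ac cmp] hjj /negP h1 /negP h2 i.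
case/orP: (cmp (inl i) (inr j) erefl erefl) => // hji.
case/orP: (cmp (inl i) (inr j') erefl erefl) => [h|h].
  by case: h1; exact: anc_trans hji h.
by case: (anc_comparable hji h) => [[/eqP]|[]] //; rewrite (negbTE hjj).
Qed.

(* The number of flips forced on the tracked pairs by a walk that ends at b,
   when S is the set of right vertices that at some point of the walk lie
   below every left vertex. *)
Definition cost b (S : {set 'I_q}) : nat :=
  \sum_(j : 'I_q)
    (\sum_(i : 'I_p) (~~ anc b (inr j) (inl i) + 2 * (anc b (inr j) (inl i) && (j \in S)))
     + \sum_(j' : 'I_q | j < j') ~~ ((j \in S) && (j' \in S))).

Section Walk.
Variables (a b : rtree T) (s : seq (rtree T)).
Hypothesis a_ancestral : ancestral e a.
Hypothesis a_walk : rwalk e a s.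
Hypothesis a_last : last a s = b.
Hypothesis a_tracked : forall x y, tracked x y -> anc a x y.
Hypothesis b_right_rev : forall j j' : 'I_q, j < j' -> anc b (inr j') (inr j).

Let n := size s.
Let tr := walk_tree a s.
Let S := [set j : 'I_q | [exists k : 'I_n.+1, [forall i, anc (tr k) (inl i) (inr j)]]].

Let tr0 : tr 0 = a. Proof. by []. Qed.
Let trn : tr n = b. Proof. by rewrite /tr /walk_tree -last_nth. Qed.

Let tr_ancestral m : m <= n -> ancestral e (tr m).
Proof.
case: m => [_|m hm]; first exact: a_ancestral.
by apply: search_tree_ancestral; exact: (rwalk_step a_walk hm).1.
Qed.

Let left_cost_le i j :
  ~~ anc b (inr j) (inl i) + 2 * (anc b (inr j) (inl i) && (j \in S))
    <= flips tr n (inr j) (inl i).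
Proof.
have hcmp m : m <= n -> anc (tr m) (inr j) (inl i) || anc (tr m) (inl i) (inr j).
  by move=> hm; rewrite orbC; exact: (tr_ancestral hm).2 (inl i) (inr j) isT isT.
have a_ji : anc (tr 0) (inr j) (inl i) by exact: a_tracked.
case hb: (anc b (inr j) (inl i)) => /=; last first.
  by have := changes_le_flips hcmp (leqnn n); rewrite a_ji trn hb.
case: (boolP (j \in S)) => [|_]; last by rewrite muln0.
rewrite inE => /existsP[k /forallP below_i]; have hk := ltn_ord k.
have := changes_le_flips hcmp hk; rewrite a_ji trn hb.
by rewrite (negbTE (anc_asym (tr_ancestral hk).1 (below_i i))).
Qed.

Let right_cost_le (j j' : 'I_q) : j < j' ->
  ~~ ((j \in S) && (j' \in S)) <= flips tr n (inr j) (inr j').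
Proof.
move=> hjj'; case: (boolP ((j \in S) && (j' \in S))) => //= hS.
have hcmp m : m <= n -> anc (tr m) (inr j) (inr j') || anc (tr m) (inr j') (inr j).
  move=> hm; apply/negPn/negP; rewrite negb_or => /andP[h1 h2].
  have hne : j != j' by rewrite neq_ltn hjj'.
  have hm' : m < n.+1 by [].
  apply/(negP hS)/andP; split; rewrite inE; apply/existsP; exists (Ordinal hm');
    apply/forallP => i /=.
    exact: (incomparable_right_below_left (tr_ancestral hm) hne h1 h2 i).
  by rewrite eq_sym in hne; exact: (incomparable_right_below_left (tr_ancestral hm) hne h2 h1 i).
have b_jj' : ~~ anc b (inr j) (inr j').
  by have [+ _] := tr_ancestral (leqnn n); rewrite trn => /anc_asym; apply; exact: b_right_rev.
by have := changes_le_flips hcmp (leqnn n); rewrite tr0 trn a_tracked //= (negbTE b_jj').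
Qed.

Lemma walk_cost_le : exists S : {set 'I_q}, cost b S <= size s.
Proof.
exists S; apply: leq_trans (walk_flips_le tracked_asym a_ancestral.1 a_walk).
rewrite big_sumType /= big1 ?add0n => [|i _]; last by rewrite big_pred0.
apply: leq_sum => j _; rewrite big_sumType /=.
apply: leq_add; first by apply: leq_sum => i _; exact: left_cost_le.
by apply: leq_sum => j' hjj'; exact: right_cost_le.
Qed.

End Walk.

End KpqWalk.

Section Broom.
Variables (T : finType) (e : rel T) (rk : T -> nat) (k : nat) (x0 : T).
Hypothesis rk_inj : injective rk.
Hypothesis rk_lt : forall x, rk x < #|T|.
Hypothesis k_gt0 : 0 < k.
Hypothesis k_le : k <= #|T|.

Definition unrank j := odflt x0 [pick x | rk x == j].

(* The vertices of rank < k form a path rooted at rank 0; every other vertex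
   is a leaf hanging from the vertex of rank k - 1. *)
Definition broom : rtree T :=
  [ffun z => if rk z == 0 then None else Some (unrank (minn (rk z) k).-1)].

Lemma rk_unrank j : j < #|T| -> rk (unrank j) = j.
Proof.
move=> hj; rewrite /unrank; case: pickP => [x /eqP //|none].
pose f x : 'I_#|T| := Ordinal (rk_lt x).
have f_inj : injective f by move=> a b [] /rk_inj.
have /codomP[x /(congr1 val) /= hx] := inj_card_onto f_inj (eq_leq (card_ord _)) (Ordinal hj).
by move: (none x); rewrite -hx eqxx.
Qed.

Lemma broom_par z : rk z != 0 -> broom z = Some (unrank (minn (rk z) k).-1).
Proof. by rewrite ffunE => /negbTE ->. Qed.

Lemma rk_broom_par z w : broom z = Some w -> rk w < rk z /\ rk w < k.
Proof.
rewrite ffunE; case: eqP => // hz [<-]; have := rk_lt z.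
by rewrite rk_unrank; lia.
Qed.

Lemma anc_broom x z : anc broom x z = (rk x < rk z) && (rk x < k).
Proof.
apply/idP/andP => [|[hxz hxk]].
  move: x z; apply: anc_ind => [x z /rk_broom_par[]|x z w /rk_broom_par[h1 _] _ [h2 h3]] //.
  by split=> //; exact: ltn_trans h2 h1.
elim: {z}(rk z) {-2}z (leqnn (rk z)) hxz => [|N IH] z hz hxz; first by lia.
have hz0 : rk z != 0 by lia.
have hpar := broom_par hz0.
have hw : rk (unrank (minn (rk z) k).-1) = (minn (rk z) k).-1.
  by rewrite rk_unrank //; have := rk_lt z; lia.
case: (ltngtP (rk x) (minn (rk z) k).-1) => hc; last 2 first.
- by lia.
- by rewrite -(rk_inj (etrans hw (esym hc))); exact: anc_par.
apply: anc_trans (IH _ _ _) (anc_par hpar); rewrite hw //; lia.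
Qed.

Definition rank_ge j := [set z | j <= rk z].

Lemma rank_geD1 j : j < #|T| -> rank_ge j :\ unrank j = rank_ge j.+1.
Proof.
move=> hj; apply/setP => z; rewrite !inE.
have -> : (z == unrank j) = (rk z == j).
  by apply/eqP/eqP => [->|h]; [rewrite rk_unrank | apply: rk_inj; rewrite rk_unrank].
by rewrite ltn_neqAle eq_sym.
Qed.

Lemma broom_search_tree :
  (forall j, j.+1 < k -> forall z, z \in rank_ge j.+1 ->
     Defs.comp e (rank_ge j.+1) z = rank_ge j.+1) ->
  (forall z, z \in rank_ge k -> Defs.comp e (rank_ge k) z = [set z]) ->
  is_search_tree e broom.
Proof.
move=> conn_path disc_leaves.
have st d : d < k -> st_on e broom (rank_ge (k.-1 - d)) (unrank (k.-1 - d)).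
  elim: d => [|d IH] hd.
  - rewrite subn0; constructor; first by rewrite inE rk_unrank //; lia.
    rewrite rank_geD1 ?prednK //.
    move=> C /imsetP[x hx ->]; rewrite disc_leaves //.
    have hxk : k <= rk x by move: hx; rewrite inE.
    exists x; first by rewrite inE.
    split; first by rewrite broom_par; [congr (Some (unrank _)); lia | lia].
    constructor; first by rewrite inE.
    by rewrite setDv => C' /imsetP[y]; rewrite inE.
  - constructor; first by rewrite inE rk_unrank //; lia.
    rewrite rank_geD1; last by lia.
    move=> C /imsetP[x hx ->]; rewrite conn_path //; last by lia.
    exists (unrank (k.-1 - d.+1).+1); first by rewrite inE rk_unrank //; lia.
    split.
      rewrite broom_par rk_unrank; try lia.
      by congr (Some (unrank _)); lia.
    by rewrite (_ : (k.-1 - d.+1).+1 = k.-1 - d); [apply: IH | ]; lia.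
exists (unrank 0); split; first by rewrite ffunE rk_unrank ?eqxx //; lia.
have -> : [set: T] = rank_ge 0 by apply/setP => z; rewrite !inE.
by rewrite -(subnn k.-1); apply: st; lia.
Qed.

End Broom.

Lemma comp_singleton (T : finType) (e : rel T) (S : {set T}) z :
  S = [set z] -> Defs.comp e S z = S.
Proof. by move=> ->; apply/setP => w; rewrite !inE; case: eqP => // ->; rewrite connect0. Qed.

Section KpqComponents.
Variables p q : nat.
Local Notation T := ('I_p + 'I_q)%type.
Local Notation e := (Kpq_rel p q).

Lemma card_Kpq : #|{: T}| = p + q.
Proof. by rewrite card_sum !card_ord. Qed.

Lemma comp_Kpq_full (S : {set T}) i j :
  inl i \in S -> inr j \in S -> forall z, z \in S -> Defs.comp e S z = S.
Proof.
move=> hi hj z hz; apply/setP => w; rewrite inE.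
case: (boolP (w \in S)) => //= hw.
have edge x y : x \in S -> y \in S -> e x y -> connect (induced_rel e S) x y.
  by move=> hx hy hxy; apply: connect1; rewrite /induced_rel hxy hx hy.
case: z hz => [a|a] hz; case: w hw => [b|b] hw; try exact: edge.
- exact: connect_trans (edge _ (inr j) hz hj isT) (edge _ _ hj hw isT).
- exact: connect_trans (edge _ (inl i) hz hi isT) (edge _ _ hi hw isT).
Qed.

Lemma comp_Kpq_left (S : {set T}) :
  (forall j, inr j \notin S) -> forall z, z \in S -> Defs.comp e S z = [set z].
Proof.
move=> noright z hz; apply/setP => w; rewrite !inE.
apply/idP/idP => [/andP[hw /connectP[s hs ->]]|/eqP ->]; last by rewrite hz connect0.
case: s hs => [|y s] //= /andP[/and3P[hzy hz' hy] _].
case: z hz hz' hzy => [a|a] ha ha'; case: y hy => [b|b] hb //= _.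
  by move: (noright b); rewrite hb.
by move: (noright a); rewrite ha.
Qed.

End KpqComponents.

Lemma bin2_double n : 2 * 'C(n, 2) = n * n.-1.
Proof. by elim: n => [|n IH] //; rewrite binS bin1 mulnDr IH; case: n {IH} => //= n; nia. Qed.

Lemma sum_leq_ord n c : \sum_(i < n) (c <= i) = n - c.
Proof. by elim: n => [|n IH]; rewrite ?big_ord0 // big_ord_recr /= IH; case: leqP; lia. Qed.

Lemma sum_gtn_ord n c : \sum_(i < n) ~~ (c <= i) = minn c n.
Proof. by elim: n => [|n IH]; rewrite ?big_ord0 ?minn0 // big_ord_recr /= IH; case: leqP; lia. Qed.

Lemma sum_pairs_card n (P : pred 'I_n) :
  \sum_(j < n) \sum_(j' < n | j < j') (P j && P j') = 'C(\sum_(j < n) P j, 2).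
Proof.
apply/eqP; rewrite -(eqn_pmul2l (isT : 0 < 2)) bin2_double; apply/eqP.
have sym : \sum_(j < n) \sum_(j' < n | j' < j) (P j && P j') =
           \sum_(j < n) \sum_(j' < n | j < j') (P j && P j').
  rewrite (exchange_big_dep xpredT) //=; apply: eq_bigr => j _.
  by apply: eq_bigr => j' _; rewrite andbC.
have others j : \sum_(j' < n | j != j') (P j && P j') = P j * (\sum_(j < n) P j).-1.
  case: (boolP (P j)) => hj /=; last by rewrite big1.
  rewrite mul1n [in RHS](bigD1 j) //= hj add1n /=.
  by apply: eq_bigl => j'; rewrite eq_sym.
have split j : \sum_(j' < n | j != j') (P j && P j') =
    \sum_(j' < n | j < j') (P j && P j') + \sum_(j' < n | j' < j) (P j && P j').
  rewrite (bigID (fun j' : 'I_n => j < j')) /=; congr (_ + _); apply: eq_bigl => j';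
    by rewrite -val_eqE /=; case: ltngtP.
rewrite mul2n -addnn -{1}sym -big_split big_distrl /=.
by apply: eq_bigr => j _; rewrite -others split addnC.
Qed.

Lemma sum_pairs_not_both n (S : {set 'I_n}) :
  \sum_(j < n) \sum_(j' < n | j < j') ~~ ((j \in S) && (j' \in S))
    + 'C(\sum_(j < n) (j \in S), 2) = 'C(n, 2).
Proof.
rewrite -sum_pairs_card -big_split /=.
have := sum_pairs_card (fun _ : 'I_n => true); rewrite sum_nat_const card_ord muln1 => <-.
apply: eq_bigr => j _; rewrite -big_split; apply: eq_bigr => j' _.
by case: ((j \in S) && (j' \in S)).
Qed.

Ltac case_ifs :=
  repeat match goal with |- context [if ?b then _ else _] => case: (boolP b) => ? end.

Section TwoBrooms.
Variables p q t m : nat.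
Hypothesis q_gt0 : 0 < q.
Hypothesis t_lt_p : t < p.
Hypothesis m_lt_q : m < q.
Hypothesis t0_m : t = 0 -> m.+1 = q.
Local Notation T := ('I_p + 'I_q)%type.
Local Notation e := (Kpq_rel p q).

Let p_gt0 : 0 < p. Proof. exact: leq_ltn_trans (leq0n t) t_lt_p. Qed.
Let q_pred : q.-1 < q. Proof. by rewrite prednK. Qed.
Let p_pred : p.-1 < p. Proof. by rewrite prednK. Qed.
Let x0 : T := inl (Ordinal p_gt0).

(* treeA: the path inr 0, ..., inr (q-1), with every left vertex a leaf below it. *)
Definition rankA (z : T) : nat := match z with inl i => q + i | inr j => j end.

(* treeB: the path of left vertices 0, ..., p-t-2, then the right vertices
   q-1, ..., q-m, then the left vertex p-t-1, then the right vertices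
   q-m-1, ..., 0, with the t remaining left vertices as leaves below it. *)
Definition rankB (z : T) : nat :=
  match z with
  | inl i => if i < p - t - 1 then val i
             else if i == p - t - 1 :> nat then p - t - 1 + m else i + q
  | inr j => if q - m <= j then p - t - 1 + (q - 1 - j)
             else p - t + m + (q - m - 1 - j)
  end.

Definition treeA := broom rankA q x0.
Definition treeB := broom rankB (p + q - t) x0.

Let rankA_inj : injective rankA.
Proof.
move=> [i|j] [i'|j'] /= h.
- by congr inl; apply: val_inj => /=; lia.
- by have := ltn_ord j'; lia.
- by have := ltn_ord j; lia.
- by congr inr; apply: val_inj.
Qed.

Let rankA_lt z : rankA z < #|{: T}|.
Proof. by rewrite card_Kpq; case: z => [i|j] /=; [have := ltn_ord i | have := ltn_ord j]; lia. Qed.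

Let rankB_inj : injective rankB.
Proof.
move=> [i|j] [i'|j'] /= h.
- congr inl; apply: val_inj => /=; move: h.
  by have := ltn_ord i; have := ltn_ord i'; case_ifs; lia.
- by move: h; have := ltn_ord i; have := ltn_ord j'; case_ifs; lia.
- by move: h; have := ltn_ord i'; have := ltn_ord j; case_ifs; lia.
- congr inr; apply: val_inj => /=; move: h.
  by have := ltn_ord j; have := ltn_ord j'; case_ifs; lia.
Qed.

Let rankB_lt z : rankB z < #|{: T}|.
Proof.
by rewrite card_Kpq; case: z => [i|j] /=; [have := ltn_ord i | have := ltn_ord j]; case_ifs; lia.
Qed.

Let q_le : q <= #|{: T}|. Proof. by rewrite card_Kpq leq_addl. Qed.
Let kB_gt0 : 0 < p + q - t. Proof. lia. Qed.
Let kB_le : p + q - t <= #|{: T}|. Proof. rewrite card_Kpq; lia. Qed.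

Lemma treeA_search_tree : is_search_tree e treeA.
Proof.
apply: broom_search_tree rankA_inj rankA_lt q_gt0 q_le _ _.
- move=> j hj z; apply: (comp_Kpq_full (i := Ordinal p_gt0) (j := Ordinal q_pred));
    rewrite inE /=; lia.
- by apply: comp_Kpq_left => j; rewrite inE /= -ltnNge.
Qed.

Lemma treeA_tracked x y : tracked x y -> anc treeA x y.
Proof.
rewrite anc_broom //; case: x => [//|j]; case: y => [i|j'] /=; have := ltn_ord j; lia.
Qed.

Lemma treeB_search_tree : is_search_tree e treeB.
Proof.
apply: broom_search_tree rankB_inj rankB_lt kB_gt0 kB_le _ _; last first.
  by apply: comp_Kpq_left => j; rewrite inE /=; have := ltn_ord j; case_ifs; lia.
move=> j hj z hz.
have right0 : inr (Ordinal q_gt0) \in rank_ge rankB j.+1 by rewrite inE /=; case_ifs; lia.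
have [t0|t_gt0] := posnP t; last first.
  by apply: (comp_Kpq_full (i := Ordinal p_pred) _ right0 hz); rewrite inE /=; case_ifs; lia.
have := t0_m t0; case: (ltnP j.+1 (p + q - 1)) => hj2 hm.
  by apply: (comp_Kpq_full (i := Ordinal p_pred) _ right0 hz); rewrite inE /=; case_ifs; lia.
have single w : w \in rank_ge rankB j.+1 -> w = inr (Ordinal q_gt0).
  rewrite inE => hw; apply: rankB_inj; move: hw.
  by case: w => [i|j'] /=; [have := ltn_ord i | have := ltn_ord j']; case_ifs; lia.
rewrite (single z hz); apply: comp_singleton; apply/setP => w; rewrite inE.
by apply/idP/eqP => [/single|->].
Qed.

Lemma treeB_right_rev (j j' : 'I_q) : j < j' -> anc treeB (inr j') (inr j).
Proof. by rewrite anc_broom //=; have := ltn_ord j'; case_ifs; lia. Qed.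

Lemma anc_treeB_left i j :
  anc treeB (inr j) (inl i) = (p - (t + (q - m <= j)) <= i).
Proof.
rewrite anc_broom //=; have := ltn_ord j; have := ltn_ord i.
by case_ifs => hi hj; apply/idP/idP; lia.
Qed.

Lemma sum_left_cost_treeB (S : {set 'I_q}) :
  \sum_(j < q) \sum_(i < p)
      (~~ anc treeB (inr j) (inl i) + 2 * (anc treeB (inr j) (inl i) && (j \in S)))
    = (p - t) * q - m +
      2 * (t * \sum_(j < q) (j \in S) + \sum_(j < q) ((q - m <= j) && (j \in S))).
Proof.
have per_j (j : 'I_q) :
    \sum_(i < p) (~~ anc treeB (inr j) (inl i) + 2 * (anc treeB (inr j) (inl i) && (j \in S)))
    = p - (t + (q - m <= j)) + 2 * ((j \in S) * t + ((q - m <= j) && (j \in S))).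
  under eq_bigr => i _ do rewrite anc_treeB_left.
  rewrite big_split /= sum_gtn_ord -big_distrr /=; congr (_ + 2 * _); first lia.
  case: (boolP (j \in S)) => hj; last by rewrite big1 ?andbF // => i _; rewrite andbF.
  under eq_bigr => i _ do rewrite andbT.
  by rewrite sum_leq_ord; case: (q - m <= j); lia.
rewrite (eq_bigr _ (fun j _ => per_j j)) big_split -big_distrr /= big_split /=.
rewrite -big_distrl /= [_ * t]mulnC; congr (_ + _).
have : \sum_(j < q) (p - (t + (q - m <= j))) + \sum_(j < q) (q - m <= j) = (p - t) * q.
  rewrite -big_split /= (eq_bigr (fun _ => p - t)) => [|j _]; last by case: (q - m <= j); lia.
  by rewrite sum_nat_const card_ord mulnC.
by rewrite sum_leq_ord (_ : q - (q - m) = m) ?addnK => [<-|]; [rewrite addnK | lia].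
Qed.

Lemma cost_treeB_ge (S : {set 'I_q}) N :
  (forall s s1, s1 <= m -> s <= q - m + s1 ->
     N + 'C(s, 2) <= (p - t) * q - m + 2 * (t * s + s1) + 'C(q, 2)) ->
  N <= cost treeB S.
Proof.
move=> arith.
set s := \sum_(j < q) (j \in S).
set s1 := \sum_(j < q) ((q - m <= j) && (j \in S)).
have s1_le : s1 <= m.
  apply: leq_trans (_ : \sum_(j < q) (q - m <= j) <= m); last by rewrite sum_leq_ord; lia.
  by apply: leq_sum => j _; case: (q - m <= j); case: (j \in S).
have s_le : s <= q - m + s1.
  have -> : s = \sum_(j < q) (~~ (q - m <= j) && (j \in S)) + s1.
    by rewrite -big_split; apply: eq_bigr => j _; case: (q - m <= j); case: (j \in S).
  rewrite leq_add2r; apply: leq_trans (_ : \sum_(j < q) ~~ (q - m <= j) <= q - m).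
    by apply: leq_sum => j _; case: (q - m <= j); case: (j \in S).
  by rewrite sum_gtn_ord; lia.
have := arith s s1 s1_le s_le; rewrite -(sum_pairs_not_both S) addnA leq_add2r.
by rewrite /cost big_split /= sum_left_cost_treeB.
Qed.

Lemma rot_diam_ge_Kpq N : (forall S, N <= cost treeB S) -> rot_diam_ge e N.
Proof.
move=> cost_ge; exists treeA, treeB; split; [exact: treeA_search_tree | exact: treeB_search_tree |].
move=> s hw hlast.
have [S] := walk_cost_le (search_tree_ancestral treeA_search_tree) hw hlast
  treeA_tracked treeB_right_rev.
exact: leq_trans (cost_ge S).
Qed.

End TwoBrooms.

Lemma sq_le_bound t r s s1 : r <= 4 -> s1 <= r.-1 * t.+1 ->
  s <= 4 * t + r - r.-1 * t.+1 + s1 -> s * s.-1 <= 4 * t * s + 4 * s1.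
Proof. by case: r => [|[|[|[|[|r]]]]] //= _; nia. Qed.

Lemma half_bin2_le t r : 0 < r <= 4 ->
  t * (4 * t + r) + r.-1 * t.+1 + 'C(4 * t + r, 2) %/ 2 <= 'C(4 * t + r, 2).
Proof.
move=> /andP[r0 r4]; have := bin2_double (4 * t + r).
by case: r r0 r4 => [|[|[|[|[|r]]]]] // _ _; set c := 'C(_, 2); nia.
Qed.

Lemma pred_mul_succ_lt t r : 0 < r <= 4 -> r.-1 * t.+1 < 4 * t + r.
Proof. by case: r => [|[|[|[|[|r]]]]] //= _; lia. Qed.

Lemma cost_arith p t r s s1 : 0 < r <= 4 -> t < p ->
  s1 <= r.-1 * t.+1 -> s <= 4 * t + r - r.-1 * t.+1 + s1 ->
  p * (4 * t + r) + 'C(4 * t + r, 2) %/ 2 + 'C(s, 2)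
    <= (p - t) * (4 * t + r) - r.-1 * t.+1 + 2 * (t * s + s1) + 'C(4 * t + r, 2).
Proof.
move=> r_bd t_lt s1_le s_le.
have := sq_le_bound (proj2 (andP r_bd)) s1_le s_le; have := bin2_double s.
have := half_bin2_le t r_bd; rewrite mulnBl.
have : t.+1 * (4 * t + r) <= p * (4 * t + r) by rewrite leq_mul2r t_lt orbT.
have := pred_mul_succ_lt t r_bd.
set q := 4 * t + r; set C := 'C(q, 2); set m := r.-1 * t.+1; nia.
Qed.

Unset Implicit Arguments.

Theorem corollary4p8 (p q : nat) :
  0 < p -> 0 < q -> (2 <= q \/ p <= 4 * q) -> q <= 4 * p ->
  rot_diam_ge (Kpq_rel p q) (p * q + 'C(q, 2) %/ 2).
Proof.
move=> _ q_gt0 _ q_le.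
have [t [r [q_eq r_bd]]] : exists t r, q = 4 * t + r /\ 0 < r <= 4.
  by exists (q.-1 %/ 4), (q.-1 %% 4).+1; lia.
have t_lt : t < p by lia.
have m_lt : r.-1 * t.+1 < q by rewrite q_eq; exact: pred_mul_succ_lt.
have t0 : t = 0 -> (r.-1 * t.+1).+1 = q by move=> t0; rewrite q_eq t0; case/andP: r_bd; lia.
apply: (rot_diam_ge_Kpq (t_lt_p := t_lt) q_gt0 m_lt t0) => S.
apply: (cost_treeB_ge q_gt0 t_lt m_lt t0) => s s1 s1_le s_le.
by rewrite q_eq; apply: cost_arith; rewrite // -q_eq.
Qed.
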